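(* Consider the equation $$m_t+u_xu^{-3}m+(u^{-2}m)_x=0,\qquad m=u-u_{xx}.$$ For every wave speed $c>0$ and every parameter $b$ with $0<b<1$, this equation possesses smooth solitary travelling wave solutions $u=U(x-ct)$ (two of them, related by $U\leftrightarrow -U$), where $U$ is smooth, nowhere zero, $U(\xi)\to0$ as $|\xi|\to\infty$, and $U$ has a single peak with $$\max_\xi|U(\xi)|=\frac{b\sqrt{2-b^2}}{\sqrt c}.$$ These solutions satisfy the first-order ODE $U'^2=U^2\,\dfrac{b^2-1+\sqrt{1-cU^2}}{1+\sqrt{1-cU^2}}$.
   Context: A travelling wave of speed $c$ is a solution of the form $u(t,x)=U(\xi)$ with $\xi=x-ct$; for smooth $U$ the equation reduces to the third-order ODE $-c(U'-U''')+U'(U-U'')U^{-3}+((U-U'')U^{-2})'=0$. *)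

From Stdlib Require Import Reals.
From Coquelicot Require Import Coquelicot.
Open Scope R_scope.

Definition smooth (U : R -> R) : Prop :=
  forall (n : nat) (x : R), ex_derive_n U n x.

Definition tw_ode (c : R) (U : R -> R) (xi : R) : Prop :=
  - c * (Derive U xi - Derive_n U 3 xi)
  + Derive U xi * (U xi - Derive_n U 2 xi) / (U xi) ^ 3
  + Derive (fun y => (U y - Derive_n U 2 y) / (U y) ^ 2) xi = 0.

Definition first_order_ode (c b : R) (U : R -> R) (xi : R) : Prop :=
  (Derive U xi) ^ 2
  = (U xi) ^ 2 * (b ^ 2 - 1 + sqrt (1 - c * (U xi) ^ 2))
                / (1 + sqrt (1 - c * (U xi) ^ 2)).

Definition single_peak (U : R -> R) (M : R) : Prop :=
  exists xi0 : R,
    Rabs (U xi0) = M /\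
    (forall x, Rabs (U x) <= M) /\
    (forall x y, x < y -> y <= xi0 -> Rabs (U x) < Rabs (U y)) /\
    (forall x y, xi0 <= x -> x < y -> Rabs (U y) < Rabs (U x)).

Definition solitary_wave (c b : R) (U : R -> R) : Prop :=
  smooth U /\
  (forall xi, U xi <> 0) /\
  is_lim U p_infty 0 /\
  is_lim U m_infty 0 /\
  single_peak U (b * sqrt (2 - b ^ 2) / sqrt c) /\
  (forall xi, tw_ode c U xi) /\
  (forall xi, first_order_ode c b U xi).

From Stdlib Require Import Reals Ranalysis5 Lra Psatz ClassicalEpsilon FunctionalExtensionality.
From Coquelicot Require Import Coquelicot.
Open Scope R_scope.

(* With [b^2 = 2 T^2] and [c k^2 = 4 (1 - T^2)] the wave is
   [U = ± k sqrt (T^2 - θ^2) / (1 - θ^2)], where [θ] is the inverse of the increasing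
   bijection [ξ(θ) = ln ((T + θ) / (T - θ)) / (2 T) - ln ((1 + θ) / (1 - θ))] of
   [(-T, T)] onto [R].  Along this parametrisation
   [sqrt (1 - c U^2) = (1 - 2 T^2 + θ^2) / (1 - θ^2)] and [U' = - θ U], which is the
   first-order ODE; [θ -> ±T] at [±oo] gives the decay, and [|U|] decreasing in [θ^2]
   gives the single peak [k T] at [ξ = 0].  Finally [θ], [W = 1 / (1 - 2 T^2 + θ^2)],
   [U] and [1 / U] solve a polynomial differential system
   ([θ' = (T^2 - θ^2) (1 - θ^2) W], [U' = - θ U], ...), so all derivatives of [U] are
   polynomials in these four functions: [U] is smooth and the travelling-wave ODE
   reduces to a rational identity. *)

Section Phase.
Variable T : R.
Hypothesis T_pos : 0 < T.
Hypothesis T_small : 2 * T ^ 2 < 1.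

Definition phase (t : R) : R :=
  / (2 * T) * (ln (T + t) - ln (T - t)) - (ln (1 + t) - ln (1 - t)).

Definition phase_slope (t : R) : R :=
  (1 - 2 * T ^ 2 + t ^ 2) / ((T ^ 2 - t ^ 2) * (1 - t ^ 2)).

Lemma T_lt_1 : T < 1.
Proof. nra. Qed.

Lemma is_derive_phase t : -T < t < T -> is_derive phase t (phase_slope t).
Proof.
  intros Ht; pose proof T_lt_1; unfold phase, phase_slope.
  auto_derive.
  - repeat split; lra.
  - field; repeat split; nra.
Qed.

Lemma phase_slope_pos t : -T < t < T -> 0 < phase_slope t.
Proof.
  intros Ht; pose proof T_lt_1; unfold phase_slope.
  apply Rdiv_lt_0_compat; [nra | apply Rmult_lt_0_compat; nra].
Qed.

Lemma phase_increasing x y : -T < x -> x < y -> y < T -> phase x < phase y.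
Proof.
  apply (incr_function phase (Finite (-T)) (Finite T) phase_slope); simpl.
  - intros t Ht1 Ht2; apply is_derive_phase; lra.
  - intros t Ht1 Ht2; apply phase_slope_pos; lra.
Qed.

Lemma continuity_phase t : -T < t < T -> continuity_pt phase t.
Proof.
  intros Ht; apply continuity_pt_filterlim, (ex_derive_continuous phase).
  eexists; apply is_derive_phase, Ht.
Qed.

Lemma phase_opp t : phase (- t) = - phase t.
Proof.
  unfold phase.
  replace (T + - t) with (T - t) by ring; replace (T - - t) with (T + t) by ring.
  replace (1 + - t) with (1 - t) by ring; replace (1 - - t) with (1 + t) by ring.
  ring.
Qed.

Lemma phase0 : phase 0 = 0.
Proof. pose proof (phase_opp 0) as H; rewrite Ropp_0 in H; lra. Qed.

Lemma phase_unbounded (M : R) : exists t, 0 <= t < T /\ M <= phase t.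
Proof.
  pose proof T_lt_1.
  set (m := Rmax 0 (M + ln 2 - ln (1 - T))).
  assert (Hm : 0 <= m /\ M + ln 2 - ln (1 - T) <= m) by (split; [apply Rmax_l | apply Rmax_r]).
  set (E := exp (2 * T * m)).
  assert (HE : 1 <= E) by (pose proof (exp_ineq1_le (2 * T * m)); unfold E; nra).
  set (t := T * (E - 1) / (E + 1)).
  assert (Ht : 0 <= t < T).
  { unfold t; split.
    - apply Rmult_le_pos; [nra | left; apply Rinv_0_lt_compat; lra].
    - apply (Rmult_lt_reg_r (E + 1)); [lra | field_simplify; lra]. }
  exists t; split; [exact Ht |].
  assert (HTt : T + t = (T - t) * E) by (unfold t; field; lra).
  assert (ln (1 + t) <= ln 2) by (apply ln_le; lra).
  assert (ln (1 - T) <= ln (1 - t)) by (apply ln_le; lra).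
  unfold phase; rewrite HTt, ln_mult by lra; unfold E; rewrite ln_exp.
  replace (/ (2 * T) * (ln (T - t) + 2 * T * m - ln (T - t))) with m by (field; lra).
  lra.
Qed.

Lemma phase_surjective x : exists t, -T < t < T /\ phase t = x.
Proof.
  destruct (phase_unbounded (Rabs x + 1)) as (t0 & Ht0 & Hbig).
  pose proof (Rle_abs x); pose proof (Rle_abs (- x)); rewrite Rabs_Ropp in *.
  assert (t0_pos : 0 < t0).
  { destruct (proj1 Ht0) as [| <-]; [assumption |].
    rewrite phase0 in Hbig; pose proof (Rabs_pos x); lra. }
  destruct (IVT_interv (fun t => phase t - x) (- t0) t0) as (t & Ht & Hx).
  - intros a Ha; apply continuity_pt_minus;
      [apply continuity_phase; lra | apply continuity_pt_const; intros ? ?; reflexivity].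
  - lra.
  - rewrite phase_opp; lra.
  - lra.
  - exists t; split; lra.
Qed.

Definition phase_inv (x : R) : R :=
  epsilon (inhabits 0) (fun t => -T < t < T /\ phase t = x).

Lemma phase_inv_spec x : -T < phase_inv x < T /\ phase (phase_inv x) = x.
Proof. unfold phase_inv; apply epsilon_spec, phase_surjective. Qed.

Lemma phase_inv_bounds x : -T < phase_inv x < T.
Proof. apply phase_inv_spec. Qed.

Lemma phase_phase_inv x : phase (phase_inv x) = x.
Proof. apply phase_inv_spec. Qed.

Lemma phase_inv_increasing x y : x < y -> phase_inv x < phase_inv y.
Proof.
  intros Hxy; pose proof (phase_inv_bounds x) as Hx; pose proof (phase_inv_bounds y) as Hy.
  destruct (Rlt_or_le (phase_inv x) (phase_inv y)) as [| [Hlt | Heq]]; [assumption | |].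
  - pose proof (phase_increasing _ _ (proj1 Hy) Hlt (proj2 Hx)).
    rewrite !phase_phase_inv in *; lra.
  - pose proof (phase_phase_inv x); pose proof (phase_phase_inv y).
    rewrite Heq in *; lra.
Qed.

Lemma phase_inv_phase t : -T < t < T -> phase_inv (phase t) = t.
Proof.
  intros Ht; pose proof (phase_inv_bounds (phase t)) as Hb.
  pose proof (phase_phase_inv (phase t)) as Hp.
  destruct (Rtotal_order (phase_inv (phase t)) t) as [Hlt | [Heq | Hlt]]; [| exact Heq |].
  - pose proof (phase_increasing _ _ (proj1 Hb) Hlt (proj2 Ht)); lra.
  - pose proof (phase_increasing _ _ (proj1 Ht) Hlt (proj2 Hb)); lra.
Qed.

Lemma phase_inv0 : phase_inv 0 = 0.
Proof. rewrite <- phase0 at 1; apply phase_inv_phase; lra. Qed.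

Lemma continuity_phase_inv x : continuity_pt phase_inv x.
Proof.
  pose proof (phase_phase_inv (x - 1)) as Hlo; pose proof (phase_phase_inv (x + 1)) as Hhi.
  pose proof (phase_inv_bounds (x - 1)); pose proof (phase_inv_bounds (x + 1)).
  assert (Hlt : phase_inv (x - 1) < phase_inv (x + 1)) by (apply phase_inv_increasing; lra).
  apply (continuity_pt_recip_interv phase phase_inv _ _ Hlt).
  - intros u v Hu Huv Hv; apply phase_increasing; lra.
  - intros u _ _; apply phase_phase_inv.
  - intros u Hlu Huu; rewrite Hlo in Hlu; rewrite Hhi in Huu; split.
    + destruct Hlu as [Hlu | <-]; [left; apply phase_inv_increasing, Hlu | right; reflexivity].
    + destruct Huu as [Huu | ->]; [left; apply phase_inv_increasing, Huu | right; reflexivity].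
  - intros u Hbu; apply continuity_phase; lra.
  - rewrite Hlo, Hhi; lra.
Qed.

Lemma is_derive_phase_inv x : is_derive phase_inv x (/ phase_slope (phase_inv x)).
Proof.
  pose proof (phase_inv_bounds (x - 1)); pose proof (phase_inv_bounds (x + 1)).
  pose proof (phase_inv_bounds x) as Hx.
  assert (Prf : forall a, phase_inv (x - 1) <= a <= phase_inv (x + 1) -> derivable_pt phase a).
  { intros a Ha; apply ex_derive_Reals_0; eexists; apply is_derive_phase; lra. }
  assert (Hmono : phase_inv (x - 1) <= phase_inv x <= phase_inv (x + 1)).
  { split; left; apply phase_inv_increasing; lra. }
  assert (Hd : derive_pt phase (phase_inv x) (Prf _ Hmono) = phase_slope (phase_inv x)).
  { apply derive_pt_eq_0, is_derive_Reals, is_derive_phase, Hx. }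
  pose proof (phase_slope_pos _ Hx).
  apply is_derive_Reals.
  replace (/ phase_slope (phase_inv x)) with (1 / derive_pt phase (phase_inv x) (Prf _ Hmono))
    by (rewrite Hd; field; lra).
  apply (derivable_pt_lim_recip_interv phase phase_inv (x - 1) (x + 1) x Prf
           (continuity_phase_inv x)); try lra.
  intros u _; apply phase_phase_inv.
Qed.

Lemma is_lim_phase_inv_p_infty : is_lim phase_inv p_infty T.
Proof.
  apply is_lim_spec; intros eps.
  set (t0 := Rmax 0 (T - eps)).
  assert (Ht0 : 0 <= t0 /\ T - eps <= t0 /\ t0 < T).
  { unfold t0; repeat split; [apply Rmax_l | apply Rmax_r | apply Rmax_lub_lt; pose proof (cond_pos eps); lra]. }
  exists (phase t0); intros x Hx.
  pose proof (phase_inv_increasing _ _ Hx) as Hlt; rewrite phase_inv_phase in Hlt by lra.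
  pose proof (phase_inv_bounds x).
  rewrite Rabs_left by lra; lra.
Qed.

Lemma is_lim_phase_inv_m_infty : is_lim phase_inv m_infty (- T).
Proof.
  apply is_lim_spec; intros eps.
  set (t0 := Rmax 0 (T - eps)).
  assert (Ht0 : 0 <= t0 /\ T - eps <= t0 /\ t0 < T).
  { unfold t0; repeat split; [apply Rmax_l | apply Rmax_r | apply Rmax_lub_lt; pose proof (cond_pos eps); lra]. }
  exists (phase (- t0)); intros x Hx.
  pose proof (phase_inv_increasing _ _ Hx) as Hlt; rewrite phase_inv_phase in Hlt by lra.
  pose proof (phase_inv_bounds x).
  rewrite Rabs_right by lra; lra.
Qed.

End Phase.

Inductive pexpr : Type :=
  | PConst (r : R)
  | PVar (i : nat)
  | PAdd (p q : pexpr)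
  | PMul (p q : pexpr).

Declare Scope pexpr_scope.
Delimit Scope pexpr_scope with P.
Bind Scope pexpr_scope with pexpr.
Infix "+" := PAdd : pexpr_scope.
Infix "*" := PMul : pexpr_scope.
Notation "'#' r" := (PConst r) (at level 0, r at level 0) : pexpr_scope.

Fixpoint peval (v : nat -> R) (p : pexpr) : R :=
  match p with
  | PConst r => r
  | PVar i => v i
  | PAdd p q => peval v p + peval v q
  | PMul p q => peval v p * peval v q
  end.

Fixpoint pderiv (d : nat -> pexpr) (p : pexpr) : pexpr :=
  match p with
  | PConst _ => # 0
  | PVar i => d i
  | PAdd p q => pderiv d p + pderiv d q
  | PMul p q => pderiv d p * q + p * pderiv d q
  end%P.

Section PolynomialSystem.
Variable f : nat -> R -> R.
Variable d : nat -> pexpr.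

Definition pfun (p : pexpr) (x : R) : R := peval (fun i => f i x) p.

Hypothesis is_derive_var : forall i x, is_derive (f i) x (pfun (d i) x).

Lemma is_derive_pfun p x : is_derive (pfun p) x (pfun (pderiv d p) x).
Proof.
  induction p; unfold pfun; simpl.
  - apply (@is_derive_const R_AbsRing R_NormedModule).
  - apply is_derive_var.
  - apply (is_derive_plus (pfun p1) (pfun p2)); assumption.
  - apply (is_derive_mult (pfun p1) (pfun p2)); [assumption | assumption | apply Rmult_comm].
Qed.

Lemma Derive_n_pfun n p x : Derive_n (pfun p) n x = pfun (Nat.iter n (pderiv d) p) x.
Proof.
  revert x; induction n as [| n IH]; intros x; [reflexivity |].
  simpl; rewrite (Derive_ext _ _ _ IH).
  apply is_derive_unique, is_derive_pfun.
Qed.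

Lemma ex_derive_n_pfun n p x : ex_derive_n (pfun p) n x.
Proof.
  destruct n as [| n]; [exact I |]; simpl.
  apply (ex_derive_ext (pfun (Nat.iter n (pderiv d) p))).
  - intros y; symmetry; apply Derive_n_pfun.
  - eexists; apply is_derive_pfun.
Qed.

End PolynomialSystem.

Lemma peak_ratio_decreasing T u v : 2 * T ^ 2 < 1 -> 0 <= v -> v < u -> u <= T ^ 2 ->
  (T ^ 2 - u) / (1 - u) ^ 2 < (T ^ 2 - v) / (1 - v) ^ 2.
Proof.
  intros HT Hv Hvu Hu.
  assert (0 < 1 - 2 * T ^ 2 + u * (T ^ 2 - v) + v * T ^ 2) by nra.
  apply (Rmult_lt_reg_r ((1 - u) ^ 2 * (1 - v) ^ 2)); [nra |].
  replace ((T ^ 2 - u) / (1 - u) ^ 2 * ((1 - u) ^ 2 * (1 - v) ^ 2))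
    with ((T ^ 2 - u) * (1 - v) ^ 2) by (field; nra).
  replace ((T ^ 2 - v) / (1 - v) ^ 2 * ((1 - u) ^ 2 * (1 - v) ^ 2))
    with ((T ^ 2 - v) * (1 - u) ^ 2) by (field; nra).
  assert ((T ^ 2 - v) * (1 - u) ^ 2 - (T ^ 2 - u) * (1 - v) ^ 2
          = (u - v) * (1 - 2 * T ^ 2 + u * (T ^ 2 - v) + v * T ^ 2)) by ring.
  nra.
Qed.

Lemma is_derive_eq_value (f : R -> R) x l l' : is_derive f x l -> @eq R l l' -> is_derive f x l'.
Proof. now intros H <-. Qed.

Section Profile.
Variables T k s : R.
Hypothesis T_pos : 0 < T.
Hypothesis T_small : 2 * T ^ 2 < 1.
Hypothesis k_pos : 0 < k.
Hypothesis s_sq : s * s = 1.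

Local Notation theta := (phase_inv T).

Definition profile_shape (t : R) : R := s * k * sqrt (T ^ 2 - t ^ 2) / (1 - t ^ 2).

Definition profile (x : R) : R := profile_shape (theta x).

Lemma Rabs_profile_shape t : - T < t < T ->
  Rabs (profile_shape t) = k * sqrt (T ^ 2 - t ^ 2) / (1 - t ^ 2).
Proof.
  intros Ht; pose proof (T_lt_1 T T_pos T_small).
  assert (Hs2 : Rabs s * Rabs s = 1) by (rewrite <- Rabs_mult, s_sq; apply Rabs_R1).
  assert (Hs : Rabs s = 1) by (pose proof (Rabs_pos s); nra).
  unfold profile_shape, Rdiv; rewrite !Rabs_mult, Rabs_inv, Hs, (Rabs_pos_eq k), Rabs_pos_eq,
    (Rabs_pos_eq (1 - t ^ 2)) by (try apply sqrt_pos; nra).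
  ring.
Qed.

Lemma profile_shape_sq t : - T < t < T ->
  profile_shape t ^ 2 * (1 - t ^ 2) ^ 2 = k ^ 2 * (T ^ 2 - t ^ 2).
Proof.
  intros Ht; pose proof (T_lt_1 T T_pos T_small).
  rewrite <- pow2_abs, Rabs_profile_shape by exact Ht.
  unfold Rdiv; rewrite !Rpow_mult_distr, pow2_sqrt by nra.
  field; nra.
Qed.

Lemma profile_shape_neq0 t : - T < t < T -> profile_shape t <> 0.
Proof.
  intros Ht Hz; pose proof (T_lt_1 T T_pos T_small).
  assert (0 < sqrt (T ^ 2 - t ^ 2)) by (apply sqrt_lt_R0; nra).
  pose proof (Rabs_profile_shape t Ht) as Habs; rewrite Hz, Rabs_R0 in Habs.
  assert (0 < k * sqrt (T ^ 2 - t ^ 2) / (1 - t ^ 2)) by (apply Rdiv_lt_0_compat; nra).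
  lra.
Qed.

Lemma is_derive_profile_shape t : - T < t < T ->
  is_derive profile_shape t (- t * profile_shape t * phase_slope T t).
Proof.
  intros Ht; pose proof (T_lt_1 T T_pos T_small).
  assert (Hq : 0 < sqrt (T ^ 2 - t ^ 2)) by (apply sqrt_lt_R0; nra).
  assert (Hq2 : sqrt (T ^ 2 - t ^ 2) ^ 2 = T ^ 2 - t ^ 2) by (apply pow2_sqrt; nra).
  unfold profile_shape, phase_slope.
  auto_derive; [repeat split; nra |].
  replace (T * (T * 1) + - (t * (t * 1))) with (T ^ 2 - t ^ 2) by ring.
  set (q := sqrt (T ^ 2 - t ^ 2)) in *.
  replace (T ^ 2) with (q ^ 2 + t ^ 2) by lra.
  field; repeat split; nra.
Qed.

Lemma continuous_profile_shape t : t ^ 2 < 1 -> continuous profile_shape t.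
Proof.
  intros Ht; apply continuity_pt_filterlim; unfold profile_shape.
  apply continuity_pt_div; [| | nra].
  - apply continuity_pt_mult; [apply continuity_pt_const; intros ? ?; reflexivity |].
    apply continuity_pt_filterlim, (continuous_sqrt_comp (fun t => T ^ 2 - t ^ 2)).
    apply continuity_pt_filterlim.
    apply continuity_pt_minus; [apply continuity_pt_const; intros ? ?; reflexivity |].
    apply derivable_continuous_pt, derivable_pt_pow.
  - apply continuity_pt_minus; [apply continuity_pt_const; intros ? ?; reflexivity |].
    apply derivable_continuous_pt, derivable_pt_pow.
Qed.


Lemma Rabs_profile_shape_sq t : - T < t < T ->
  Rabs (profile_shape t) ^ 2 = k ^ 2 * ((T ^ 2 - t ^ 2) / (1 - t ^ 2) ^ 2).
Proof.
  intros Ht; pose proof (T_lt_1 T T_pos T_small).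
  rewrite pow2_abs; apply (Rmult_eq_reg_r ((1 - t ^ 2) ^ 2)); [| nra].
  rewrite profile_shape_sq by exact Ht; field; nra.
Qed.

Lemma Rabs_profile_shape_lt t1 t2 : - T < t1 < T -> - T < t2 < T -> t1 ^ 2 < t2 ^ 2 ->
  Rabs (profile_shape t2) < Rabs (profile_shape t1).
Proof.
  intros Ht1 Ht2 Ht12.
  assert (Hsq : Rabs (profile_shape t2) ^ 2 < Rabs (profile_shape t1) ^ 2).
  { rewrite !Rabs_profile_shape_sq by assumption.
    apply Rmult_lt_compat_l; [nra | apply peak_ratio_decreasing; nra]. }
  pose proof (Rabs_pos (profile_shape t1)); pose proof (Rabs_pos (profile_shape t2)).
  nra.
Qed.

Lemma Rabs_profile_shape0 : Rabs (profile_shape 0) = k * T.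
Proof.
  rewrite Rabs_profile_shape by lra.
  replace (T ^ 2 - 0 ^ 2) with (T ^ 2) by ring; rewrite sqrt_pow2 by lra.
  field.
Qed.

Lemma Rabs_profile_shape_le t : - T < t < T -> Rabs (profile_shape t) <= k * T.
Proof.
  intros Ht; rewrite <- Rabs_profile_shape0.
  destruct (Req_dec t 0) as [-> | Hneq]; [lra |].
  left; apply Rabs_profile_shape_lt; [lra | assumption | nra].
Qed.

Lemma profile_shape_at_bound t : t ^ 2 = T ^ 2 -> profile_shape t = 0.
Proof.
  intros Ht; unfold profile_shape.
  rewrite Ht, Rminus_diag, sqrt_0; unfold Rdiv; ring.
Qed.

Lemma profile_neq0 x : profile x <> 0.
Proof. apply profile_shape_neq0, phase_inv_bounds; assumption. Qed.

Lemma is_derive_profile x : is_derive profile x (- theta x * profile x).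
Proof.
  pose proof (phase_inv_bounds T T_pos T_small x) as Hx.
  pose proof (phase_slope_pos T T_pos T_small _ Hx).
  eapply is_derive_eq_value.
  - apply (is_derive_comp profile_shape theta);
      [apply is_derive_profile_shape, Hx | apply is_derive_phase_inv; assumption].
  - unfold profile; change (scal ?a ?b) with (a * b); field; lra.
Qed.

Lemma is_lim_profile_p_infty : is_lim profile p_infty 0.
Proof.
  rewrite <- (profile_shape_at_bound T) by reflexivity.
  apply (is_lim_comp_continuous theta profile_shape).
  - apply is_lim_phase_inv_p_infty; assumption.
  - apply continuous_profile_shape; nra.
Qed.

Lemma is_lim_profile_m_infty : is_lim profile m_infty 0.
Proof.
  rewrite <- (profile_shape_at_bound (- T)) by ring.
  apply (is_lim_comp_continuous theta profile_shape).
  - apply is_lim_phase_inv_m_infty; assumption.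
  - apply continuous_profile_shape; nra.
Qed.

Lemma profile_single_peak : single_peak profile (k * T).
Proof.
  pose proof (phase_inv_bounds T T_pos T_small) as Hb.
  pose proof (phase_inv_increasing T T_pos T_small) as Hinc.
  pose proof (phase_inv0 T T_pos T_small) as Htheta0.
  exists 0; repeat split; unfold profile.
  - rewrite Htheta0; apply Rabs_profile_shape0.
  - intros x; apply Rabs_profile_shape_le, Hb.
  - intros x y Hxy Hy; apply Rabs_profile_shape_lt; try apply Hb.
    assert (theta y <= 0) by (destruct Hy as [Hy | ->]; [rewrite <- Htheta0; left; apply Hinc, Hy | lra]).
    pose proof (Hinc x y Hxy); nra.
  - intros x y Hx Hxy; apply Rabs_profile_shape_lt; try apply Hb.
    assert (0 <= theta x) by (destruct Hx as [Hx | <-]; [rewrite <- Htheta0; left; apply Hinc, Hx | lra]).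
    pose proof (Hinc x y Hxy); nra.
Qed.

Local Notation pth := (PVar 0).
Local Notation pW := (PVar 1).
Local Notation pU := (PVar 2).
Local Notation pV := (PVar 3).

Definition profile_weight (x : R) : R := / (1 - 2 * T ^ 2 + theta x ^ 2).

Definition phase_inv_deriv : pexpr :=
  ((# (T ^ 2) + # (-1) * pth * pth) * (# 1 + # (-1) * pth * pth) * pW)%P.

Definition wave_fun (i : nat) : R -> R :=
  match i with
  | 0 => theta
  | 1 => profile_weight
  | 2 => profile
  | _ => fun x => / profile x
  end.

Definition wave_deriv (i : nat) : pexpr :=
  match i with
  | 0 => phase_inv_deriv
  | 1 => # (-2) * pth * pW * pW * phase_inv_deriv
  | 2 => # (-1) * pth * pU
  | _ => pth * pV
  end%P.

Lemma is_derive_wave_fun i x : is_derive (wave_fun i) x (pfun wave_fun (wave_deriv i) x).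
Proof.
  pose proof (phase_inv_bounds T T_pos T_small x) as Hx.
  pose proof (phase_slope_pos T T_pos T_small _ Hx).
  pose proof (profile_neq0 x).
  unfold phase_slope in *.
  destruct i as [| [| [| i]]]; cbn [wave_fun wave_deriv phase_inv_deriv pfun peval];
    unfold profile_weight.
  - eapply is_derive_eq_value; [apply is_derive_phase_inv; assumption |].
    unfold phase_slope; field; nra.
  - eapply is_derive_eq_value.
    + apply (is_derive_comp (fun t => / (1 - 2 * T ^ 2 + t ^ 2)) theta);
        [auto_derive; [nra | reflexivity] | apply is_derive_phase_inv; assumption].
    + unfold phase_slope; change (scal ?a ?b) with (a * b); field; nra.
  - eapply is_derive_eq_value; [apply is_derive_profile | ring].
  - eapply is_derive_eq_value; [apply is_derive_inv; [apply is_derive_profile | assumption] |].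
    field; assumption.
Qed.

Lemma profile_smooth : smooth profile.
Proof. intros n x; exact (ex_derive_n_pfun wave_fun wave_deriv is_derive_wave_fun n pU x). Qed.

Lemma Derive_n_profile n x :
  Derive_n profile n x = pfun wave_fun (Nat.iter n (pderiv wave_deriv) pU) x.
Proof. exact (Derive_n_pfun wave_fun wave_deriv is_derive_wave_fun n pU x). Qed.

Variables c b : R.
Hypothesis c_pos : 0 < c.
Hypothesis c_k : c * k ^ 2 = 4 * (1 - T ^ 2).
Hypothesis b_pos : 0 < b.
Hypothesis b_T : b ^ 2 = 2 * T ^ 2.

Lemma c_profile_sq x :
  c * profile x ^ 2 = 4 * (1 - T ^ 2) * (T ^ 2 - theta x ^ 2) / (1 - theta x ^ 2) ^ 2.
Proof.
  pose proof (phase_inv_bounds T T_pos T_small x) as Hx.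
  pose proof (profile_shape_sq _ Hx) as Hsq; fold (profile x) in Hsq.
  apply (Rmult_eq_reg_r (k ^ 2 * (1 - theta x ^ 2) ^ 2)); [| apply Rmult_integral_contrapositive; split; nra].
  replace (c * profile x ^ 2 * (k ^ 2 * (1 - theta x ^ 2) ^ 2))
    with (c * k ^ 2 * (profile x ^ 2 * (1 - theta x ^ 2) ^ 2)) by ring.
  rewrite c_k, Hsq; field; nra.
Qed.

Lemma sqrt_1_minus_c_profile_sq x :
  sqrt (1 - c * profile x ^ 2) = (1 - 2 * T ^ 2 + theta x ^ 2) / (1 - theta x ^ 2).
Proof.
  pose proof (phase_inv_bounds T T_pos T_small x) as Hx.
  rewrite <- (sqrt_pow2 ((1 - 2 * T ^ 2 + theta x ^ 2) / (1 - theta x ^ 2)))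
    by (left; apply Rdiv_lt_0_compat; nra).
  f_equal; rewrite c_profile_sq; field; nra.
Qed.

Lemma profile_first_order_ode x : first_order_ode c b profile x.
Proof.
  pose proof (phase_inv_bounds T T_pos T_small x) as Hx.
  unfold first_order_ode.
  rewrite (is_derive_unique _ _ _ (is_derive_profile x)), sqrt_1_minus_c_profile_sq, b_T.
  field; nra.
Qed.

Lemma profile_tw_ode x : tw_ode c profile x.
Proof.
  pose proof (phase_inv_bounds T T_pos T_small x) as Hx.
  pose proof (profile_neq0 x) as HU.
  set (m := (pU + # (-1) * Nat.iter 2 (pderiv wave_deriv) pU)%P).
  unfold tw_ode.
  rewrite (Derive_ext (fun y => (profile y - Derive_n profile 2 y) / profile y ^ 2)
                      (pfun wave_fun (m * (pV * pV))%P)).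
  2: { intros y; rewrite Derive_n_profile; unfold m, pfun; cbn [peval wave_fun].
       pose proof (profile_neq0 y); field; assumption. }
  rewrite (is_derive_unique _ _ _ (is_derive_pfun _ _ is_derive_wave_fun _ x)).
  change (Derive profile x) with (Derive_n profile 1 x).
  rewrite !Derive_n_profile.
  unfold m; cbv [pfun Nat.iter nat_rect pderiv peval wave_fun wave_deriv phase_inv_deriv profile_weight].
  replace c with (c * profile x ^ 2 / profile x ^ 2) by (field; assumption).
  rewrite c_profile_sq.
  field; repeat split; nra.
Qed.

Lemma profile_peak_value : k * T = b * sqrt (2 - b ^ 2) / sqrt c.
Proof.
  assert (Hc : 0 < sqrt c) by (apply sqrt_lt_R0; lra).
  assert (Hc2 : sqrt c ^ 2 = c) by (apply pow2_sqrt; lra).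
  assert (Hb : 0 < sqrt (2 - b ^ 2)) by (apply sqrt_lt_R0; nra).
  assert (Hb2 : sqrt (2 - b ^ 2) ^ 2 = 2 - b ^ 2) by (apply pow2_sqrt; nra).
  apply (Rmult_eq_reg_r (sqrt c)); [| lra].
  replace (b * sqrt (2 - b ^ 2) / sqrt c * sqrt c) with (b * sqrt (2 - b ^ 2)) by (field; lra).
  assert (0 < k * T) by (apply Rmult_lt_0_compat; lra).
  apply Rsqr_inj; [nra | nra |]; unfold Rsqr.
  replace (k * T * sqrt c * (k * T * sqrt c)) with (sqrt c ^ 2 * k ^ 2 * T ^ 2) by ring.
  replace (b * sqrt (2 - b ^ 2) * (b * sqrt (2 - b ^ 2))) with (b ^ 2 * sqrt (2 - b ^ 2) ^ 2) by ring.
  rewrite Hc2, Hb2, c_k, b_T; ring.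
Qed.

Lemma profile_solitary_wave : solitary_wave c b profile.
Proof.
  repeat split.
  - apply profile_smooth.
  - apply profile_neq0.
  - apply is_lim_profile_p_infty.
  - apply is_lim_profile_m_infty.
  - rewrite <- profile_peak_value; apply profile_single_peak.
  - apply profile_tw_ode.
  - apply profile_first_order_ode.
Qed.

End Profile.

Lemma wave_parameters c b : 0 < c -> 0 < b < 1 ->
  exists T k, 0 < T /\ 2 * T ^ 2 < 1 /\ 0 < k /\
    c * k ^ 2 = 4 * (1 - T ^ 2) /\ b ^ 2 = 2 * T ^ 2.
Proof.
  intros Hc Hb.
  assert (HT2 : sqrt (b ^ 2 / 2) ^ 2 = b ^ 2 / 2) by (apply pow2_sqrt; nra).
  assert (HT : 0 < sqrt (b ^ 2 / 2)) by (apply sqrt_lt_R0; nra).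
  set (T := sqrt (b ^ 2 / 2)) in *.
  assert (Hk2 : sqrt (4 * (1 - T ^ 2) / c) ^ 2 = 4 * (1 - T ^ 2) / c)
    by (apply pow2_sqrt; left; apply Rdiv_lt_0_compat; nra).
  assert (Hk : 0 < sqrt (4 * (1 - T ^ 2) / c))
    by (apply sqrt_lt_R0, Rdiv_lt_0_compat; nra).
  exists T, (sqrt (4 * (1 - T ^ 2) / c)); repeat split; try nra.
  rewrite Hk2; field; lra.
Qed.

Theorem mainTheorem7 :
  forall c b : R, 0 < c -> 0 < b < 1 ->
  exists U : R -> R,
    solitary_wave c b U /\ solitary_wave c b (fun xi => - U xi).
Proof.
  intros c b Hc Hb.
  destruct (wave_parameters c b Hc Hb) as (T & k & HT & HT2 & Hk & Hck & HbT).
  exists (profile T k 1); split.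
  - apply profile_solitary_wave; assumption || lra.
  - replace (fun xi => - profile T k 1 xi) with (profile T k (-1)).
    + apply profile_solitary_wave; assumption || lra.
    + apply functional_extensionality; intros x.
      unfold profile, profile_shape, Rdiv; ring.
Qed.
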